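(* Let $\Sigma=(\mathbb{N}_0,X,U,\mathscr{U},\phi)$ be a control system as in the standing setup and let $Q\subset X$ be a control set with $\operatorname{cl}\operatorname{Int}(Q)=\operatorname{cl}Q$. Then $Q$ is either equi-invariant in the mean or unstable in the mean.
   Context: Standing setup: $(X,d)$ is a metric space, $U$ is a compact metric space, and $F:X\times U\to X$ is a map such that $F_u:=F(\cdot,u)$ is continuous for every $u\in U$. Let $\mathscr U=U^{\mathbb N_0}$ with the product topology. For $\omega=(\omega_0,\omega_1,\dots)\in\mathscr U$, $x\in X$, set $\phi(0,x,\omega)=x$ and $\phi(k,x,\omega)=F_{\omega_{k-1}}\circ\cdots\circ F_{\omega_0}(x)$ for $k\ge1$. It is assumed that $\phi:\mathbb N_0\times X\times\mathscr U\to X$ is continuous. Notation: $\mathbb N=\{1,2,\dots\}$; $B(x,\delta)$ is the open ball; $d(y,Q)=\inf_{q\in Q}d(y,q)$; $\operatorname{Int}$ and $\operatorname{cl}$ denote interior and closure in $X$. Control set: $D\subset X$ is a control set if (i) for every $x\in D$ there is $\omega\in\mathscr U$ with $\phi(k,x,\omega)\in D$ for all $k\in\mathbb N_0$; (ii) for every $x\in D$, $D\subset\operatorname{cl}\mathcal O^+(x)$, where $\mathcal O^+(x)=\{\phi(m,x,\omega):m\in\mathbb N_0,\omega\in\mathscr U\}$; (iii) $D$ is maximal with (i) and (ii). $x\in Q$ is an equi-invariant point in the mean of $Q$ if for every $\varepsilon>0$ there exist $\delta>0$ and $\omega\in\mathscr U$ such that $\frac1n\sum_{i=0}^{n-1}d(\phi(i,y,\omega),Q)<\varepsilon$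 for all $n\in\mathbb N$ and all $y\in B(x,\delta)\cap Q$; $Q$ is equi-invariant in the mean if every point of $Q$ is such a point. $Q$ is unstable in the mean if there exists $\varepsilon>0$ such that for every $x\in Q$, every $\delta>0$ and every $\omega\in\mathscr U$ there exist $y\in B(x,\delta)\cap Q$ and $m\in\mathbb N$ with $\frac1m\sum_{i=0}^{m-1}d(\phi(i,y,\omega),Q)\ge\varepsilon$. *)

From Stdlib Require Import Reals List.
From Coquelicot Require Import Coquelicot.
Open Scope R_scope.

Definition is_metric {T : Type} (d : T -> T -> R) : Prop :=
  (forall x y, 0 <= d x y) /\
  (forall x y, d x y = 0 <-> x = y) /\
  (forall x y, d x y = d y x) /\
  (forall x y z, d x z <= d x y + d y z).

Definition m_open {T : Type} (d : T -> T -> R) (A : T -> Prop) : Prop :=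
  forall x, A x -> exists r, 0 < r /\ forall y, d x y < r -> A y.

Definition m_compact {T : Type} (d : T -> T -> R) : Prop :=
  forall (I : Type) (O : I -> T -> Prop),
    (forall i, m_open d (O i)) ->
    (forall u, exists i, O i u) ->
    exists l : list I, forall u, exists i, In i l /\ O i u.

Definition m_interior {X : Type} (d : X -> X -> R) (A : X -> Prop) : X -> Prop :=
  fun x => exists r, 0 < r /\ forall y, d x y < r -> A y.

Definition m_closure {X : Type} (d : X -> X -> R) (A : X -> Prop) : X -> Prop :=
  fun x => forall r, 0 < r -> exists y, A y /\ d x y < r.

(** Trajectory: phi 0 x w = x, phi (k+1) x w = F (phi k x w) (w k),
    i.e. phi k x w = F_{w_{k-1}} o ... o F_{w_0} (x). *)
Fixpoint traj {X U : Type} (F : X -> U -> X) (k : nat) (x : X) (w : nat -> U) : X :=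
  match k with
  | O => x
  | S k' => F (traj F k' x w) (w k')
  end.

(** Continuity of phi on N_0 x X x U^{N_0} (N_0 discrete, U^{N_0} with the
    product topology): unfolded via the standard neighbourhood base
    B(x,delta) x {w' | dU (w' i) (w i) < delta for all i < N}. *)
Definition traj_continuous {X U : Type} (d : X -> X -> R) (dU : U -> U -> R)
  (F : X -> U -> X) : Prop :=
  forall (k : nat) (x : X) (w : nat -> U) (eps : R), 0 < eps ->
    exists (delta : R) (N : nat), 0 < delta /\
      forall (y : X) (w' : nat -> U),
        d x y < delta ->
        (forall i, (i < N)%nat -> dU (w' i) (w i) < delta) ->
        d (traj F k x w) (traj F k y w') < eps.

Definition orbit_plus {X U : Type} (F : X -> U -> X) (x : X) : X -> Prop :=
  fun z => exists (m : nat) (w : nat -> U), z = traj F m x w.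

Definition ctrl_i {X U : Type} (F : X -> U -> X) (D : X -> Prop) : Prop :=
  forall x, D x -> exists w : nat -> U, forall k, D (traj F k x w).

Definition ctrl_ii {X U : Type} (d : X -> X -> R) (F : X -> U -> X)
  (D : X -> Prop) : Prop :=
  forall x, D x -> forall y, D y -> m_closure d (orbit_plus F x) y.

Definition control_set {X U : Type} (d : X -> X -> R) (F : X -> U -> X)
  (D : X -> Prop) : Prop :=
  ctrl_i F D /\ ctrl_ii d F D /\
  (forall D' : X -> Prop,
     (forall x, D x -> D' x) -> ctrl_i F D' -> ctrl_ii d F D' ->
     forall x, D' x -> D x).

Definition dist_set {X : Type} (d : X -> X -> R) (Q : X -> Prop) (y : X) : R :=
  real (Glb_Rbar (fun r => exists q, Q q /\ r = d y q)).

(** (1/n) * sum_{i=0}^{n-1} f i  (used for n >= 1). *)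
Definition mean (f : nat -> R) (n : nat) : R :=
  / INR n * sum_f_R0 f (n - 1).

Definition equi_inv_mean_point {X U : Type} (d : X -> X -> R) (F : X -> U -> X)
  (Q : X -> Prop) (x : X) : Prop :=
  forall eps, 0 < eps ->
    exists (delta : R) (w : nat -> U), 0 < delta /\
      forall (n : nat) (y : X), (1 <= n)%nat -> d x y < delta -> Q y ->
        mean (fun i => dist_set d Q (traj F i y w)) n < eps.

Definition equi_inv_mean {X U : Type} (d : X -> X -> R) (F : X -> U -> X)
  (Q : X -> Prop) : Prop :=
  forall x, Q x -> equi_inv_mean_point d F Q x.

Definition unstable_mean {X U : Type} (d : X -> X -> R) (F : X -> U -> X)
  (Q : X -> Prop) : Prop :=
  exists eps, 0 < eps /\
    forall x, Q x -> forall delta, 0 < delta -> forall w : nat -> U,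
      exists y, d x y < delta /\ Q y /\
        exists m : nat, (1 <= m)%nat /\
          mean (fun i => dist_set d Q (traj F i y w)) m >= eps.

(** Write [equi_inv_mean_at Q x eps] for "some control w keeps every y in Q
    near x at mean distance < eps from Q".  The heart of the proof is a
    spreading lemma: if this holds at one point x1 of Q for eps/2, it holds at
    every point x of Q for eps.  Indeed, from x we steer along a path inside Q
    (maximality of Q) into a small ball contained in Int Q close to x1; nearby
    starting points follow this path closely by continuity of the trajectory,
    so their first m distance terms are < eps/2, and afterwards they are close
    enough to x1 to use x1's control, whose mean is < eps/2.
    Consequently either [equi_inv_mean_at] holds for every point and every
    eps (equi-invariance in the mean), or it fails at some x0 for some eps0,
    and then it fails at every point for eps0/2, which is instability in the
    mean with constant eps0/2. *)

From Stdlib Require Import Reals Lra Lia Classical Arith.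
From Coquelicot Require Import Coquelicot.
Open Scope R_scope.

Section Trajectories.
Variables (X U : Type) (F : X -> U -> X).

Lemma traj_shift j k x w :
  traj F (j + k) x w = traj F k (traj F j x w) (fun t => w (j + t)%nat).
Proof.
  induction k as [|k IH].
  - now rewrite Nat.add_0_r.
  - rewrite Nat.add_succ_r; simpl; now rewrite IH.
Qed.

Lemma traj_ext k x w w' :
  (forall t, (t < k)%nat -> w t = w' t) -> traj F k x w = traj F k x w'.
Proof.
  induction k as [|k IH]; intros Hw; simpl; auto.
  rewrite IH by (intros; apply Hw; lia). now rewrite Hw by lia.
Qed.

Definition concat (m : nat) (w w' : nat -> U) : nat -> U :=
  fun t => if Nat.ltb t m then w t else w' (t - m)%nat.

Lemma traj_concat m k x w w' :
  traj F (m + k) x (concat m w w') = traj F k (traj F m x w) w'.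
Proof.
  rewrite traj_shift, (traj_ext m x (concat m w w') w).
  - apply traj_ext; intros t _; unfold concat.
    destruct (Nat.ltb_spec (m + t) m); [lia|]. f_equal; lia.
  - intros t ht; unfold concat. destruct (Nat.ltb_spec t m); [reflexivity|lia].
Qed.

Lemma traj_concat_le m i x w w' :
  (i <= m)%nat -> traj F i x (concat m w w') = traj F i x w.
Proof.
  intros hi; apply traj_ext; intros t ht; unfold concat.
  destruct (Nat.ltb_spec t m); [reflexivity|lia].
Qed.

Lemma orbit_trans x z b :
  orbit_plus F x z -> orbit_plus F z b -> orbit_plus F x b.
Proof.
  intros [m [w ->]] [k [w' ->]]. exists (m + k)%nat, (concat m w w').
  now rewrite traj_concat.
Qed.

End Trajectories.

Arguments concat {U}.

Lemma metric_refl {T : Type} (e : T -> T -> R) : is_metric e -> forall a, e a a = 0.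
Proof. intros [_ [he _]] a. now apply he. Qed.

Section Continuity.
Variables (X U : Type) (d : X -> X -> R) (dU : U -> U -> R) (F : X -> U -> X).
Hypotheses (hd : is_metric d) (hdU : is_metric dU)
  (hphi : traj_continuous d dU F).

Lemma traj_continuous_at k x w eps :
  0 < eps -> exists delta, 0 < delta /\
    forall y, d x y < delta -> d (traj F k x w) (traj F k y w) < eps.
Proof.
  intros he. destruct (hphi k x w eps he) as [delta [N [hdel H]]].
  exists delta; split; auto. intros y hy; apply H; auto.
  intros i _; rewrite (metric_refl dU hdU); lra.
Qed.

Lemma traj_continuous_upto m x w eps :
  0 < eps -> exists delta, 0 < delta /\
    forall y, d x y < delta ->
      forall i, (i <= m)%nat -> d (traj F i x w) (traj F i y w) < eps.
Proof.
  intros he. induction m as [|m [d1 [hd1 H1]]].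
  - destruct (traj_continuous_at 0 x w eps he) as [delta [hdel H]].
    exists delta; split; auto. intros y hy i hi. replace i with 0%nat by lia; auto.
  - destruct (traj_continuous_at (S m) x w eps he) as [d2 [hd2 H2]].
    exists (Rmin d1 d2); split; [now apply Rmin_pos|].
    intros y hy i hi.
    pose proof (Rmin_l d1 d2); pose proof (Rmin_r d1 d2).
    destruct (Nat.eq_dec i (S m)) as [->|]; [apply H2; lra | apply H1; [lra|lia]].
Qed.

Lemma closure_orbit_trans a z b :
  m_closure d (orbit_plus F a) z -> m_closure d (orbit_plus F z) b ->
  m_closure d (orbit_plus F a) b.
Proof.
  intros Haz Hzb r hr.
  destruct (Hzb (r / 2)) as [c [[m [w ->]] hc]]; [lra|].
  destruct (traj_continuous_at m z w (r / 2)) as [delta [hdel H]]; [lra|].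
  destruct (Haz delta hdel) as [z' [Oz' hz']].
  exists (traj F m z' w); split.
  - apply orbit_trans with z'; auto. now exists m, w.
  - destruct hd as [_ [_ [_ htri]]].
    specialize (H z' hz'); specialize (htri b (traj F m z w) (traj F m z' w)); lra.
Qed.

Lemma orbit_in_closure a b : orbit_plus F a b -> m_closure d (orbit_plus F a) b.
Proof. intros H r hr; exists b; split; auto. now rewrite (metric_refl d hd). Qed.

(** A trajectory starting and ending in a control set stays in it: adding
    the path to Q keeps properties (i) and (ii), so maximality applies. *)
Lemma control_set_path Q x w m :
  control_set d F Q -> Q x -> Q (traj F m x w) ->
  forall i, (i <= m)%nat -> Q (traj F i x w).
Proof.
  intros [Hi [Hii Hmax]] Qx Qm i hi.
  set (D' := fun z => Q z \/ exists j, (j <= m)%nat /\ z = traj F j x w).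
  assert (hD'i : ctrl_i F D').
  { intros z [Qz | [j [hj ->]]].
    - destruct (Hi z Qz) as [w0 H0]; exists w0; intro k; now left.
    - destruct (Hi _ Qm) as [wp Hp].
      exists (concat (m - j) (fun t => w (j + t)%nat) wp); intro k.
      destruct (le_lt_dec k (m - j)).
      + right; exists (j + k)%nat; split; [lia|].
        now rewrite traj_concat_le, traj_shift by lia.
      + left. replace k with ((m - j) + (k - (m - j)))%nat by lia.
        rewrite traj_concat, <- traj_shift.
        now replace (j + (m - j))%nat with m by lia. }
  assert (hD'ii : ctrl_ii d F D').
  { intros a Ha b Hb.
    assert (hq : forall q, Q q -> m_closure d (orbit_plus F q) b).
    { intros q Qq. destruct Hb as [Qb | [j [hj ->]]]; [now apply Hii|].
      apply closure_orbit_trans with x; [now apply Hii|].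
      apply orbit_in_closure; now exists j, w. }
    destruct Ha as [Qa | [j [hj ->]]]; [now apply hq|].
    apply closure_orbit_trans with (traj F m x w); [|now apply hq].
    apply orbit_in_closure; exists (m - j)%nat, (fun t => w (j + t)%nat).
    rewrite <- traj_shift; f_equal; lia. }
  apply (Hmax D'); auto.
  - now left.
  - right; now exists i.
Qed.

(** From any point of Q one can steer, inside Q, to a point whose whole
    rho-ball lies in Q and within delta1 of a prescribed x1 in Q.  This is
    where cl Int Q = cl Q is used. *)
Lemma steer_into_interior Q x x1 delta1 :
  control_set d F Q ->
  (forall z, m_closure d (m_interior d Q) z <-> m_closure d Q z) ->
  Q x -> Q x1 -> 0 < delta1 ->
  exists m w rho, 0 < rho /\
    (forall i, (i <= m)%nat -> Q (traj F i x w)) /\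
    (forall y, d (traj F m x w) y < rho -> Q y /\ d x1 y < delta1).
Proof.
  intros hQ hint Qx Qx1 hdelta1.
  pose proof hd as [_ [_ [_ htri]]].
  assert (hcl : m_closure d (m_interior d Q) x1).
  { apply hint; intros r hr; exists x1; split; auto. now rewrite (metric_refl d hd). }
  destruct (hcl (delta1 / 2)) as [z [[r [hr Hr]] hz]]; [lra|].
  assert (Qz : Q z) by (apply Hr; rewrite (metric_refl d hd); lra).
  set (rho := Rmin r (delta1 / 2) / 2).
  pose proof (Rmin_l r (delta1 / 2)); pose proof (Rmin_r r (delta1 / 2)).
  assert (hrho : 0 < rho) by (pose proof (Rmin_pos r (delta1 / 2) hr); unfold rho; lra).
  pose proof hQ as [_ [Hii _]].
  destruct (Hii x Qx z Qz rho hrho) as [c [[m [w ->]] hc]].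
  assert (Qc : Q (traj F m x w)) by (apply Hr; unfold rho in *; lra).
  exists m, w, rho; split; [exact hrho|split].
  - now apply control_set_path.
  - intros y hy; split.
    + apply Hr. specialize (htri z (traj F m x w) y). unfold rho in *; lra.
    + pose proof (htri x1 z y); pose proof (htri z (traj F m x w) y).
      unfold rho in *; lra.
Qed.

End Continuity.

Lemma dist_set_le {X : Type} (d : X -> X -> R) (Q : X -> Prop) p q :
  is_metric d -> Q q -> dist_set d Q p <= d p q.
Proof.
  intros [hpos _] Qq. unfold dist_set.
  destruct (Glb_Rbar_correct (fun r => exists q, Q q /\ r = d p q)) as [Hlb _].
  assert (H : Rbar_le (Glb_Rbar (fun r => exists q, Q q /\ r = d p q)) (d p q))
    by (apply Hlb; now exists q).
  destruct (Glb_Rbar _); simpl in *; [exact H | contradiction | apply hpos].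
Qed.

Fixpoint sum_first (f : nat -> R) (n : nat) : R :=
  match n with O => 0 | S n => sum_first f n + f n end.

Lemma sum_f_R0_first f n : sum_f_R0 f n = sum_first f (S n).
Proof. induction n as [|n IH]; simpl in *; [lra|]. now rewrite IH. Qed.

Lemma sum_first_add f m k :
  sum_first f (m + k) = sum_first f m + sum_first (fun j => f (m + j)%nat) k.
Proof.
  induction k as [|k IH]; simpl.
  - rewrite Nat.add_0_r; lra.
  - rewrite Nat.add_succ_r; simpl; rewrite IH; lra.
Qed.

Lemma sum_first_le f n c :
  (forall i, (i < n)%nat -> f i <= c) -> sum_first f n <= INR n * c.
Proof.
  induction n as [|n IH]; intros H; [simpl; lra|]. cbn [sum_first].
  rewrite S_INR. assert (f n <= c) by (apply H; lia).
  assert (sum_first f n <= INR n * c) by (apply IH; intros; apply H; lia). lra.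
Qed.

Lemma mean_lt f n e :
  (1 <= n)%nat -> (mean f n < e <-> sum_first f n < INR n * e).
Proof.
  intros hn. unfold mean. destruct n as [|n]; [lia|].
  replace (S n - 1)%nat with n by lia. rewrite sum_f_R0_first.
  assert (hN : 0 < INR (S n)) by (apply lt_0_INR; lia).
  split; intro H.
  - apply Rmult_lt_compat_l with (r := INR (S n)) in H; auto.
    rewrite <- Rmult_assoc, Rinv_r, Rmult_1_l in H; lra.
  - apply Rmult_lt_compat_l with (r := / INR (S n)) in H; [|now apply Rinv_0_lt_compat].
    rewrite <- Rmult_assoc, Rinv_l, Rmult_1_l in H; lra.
Qed.

Lemma mean_ext f g n : (forall i, f i = g i) -> mean f n = mean g n.
Proof. intros H; unfold mean; f_equal; apply sum_eq; auto. Qed.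

Lemma mean_split_lt f m c :
  0 < c -> (forall i, (i < m)%nat -> f i <= c) ->
  (forall k, (1 <= k)%nat -> mean (fun j => f (m + j)%nat) k < c) ->
  forall n, (1 <= n)%nat -> mean f n < 2 * c.
Proof.
  intros hc Hhead Htail n hn. apply mean_lt; auto.
  assert (hnpos : 0 < INR n) by (apply lt_0_INR; lia).
  destruct (le_lt_dec n m).
  - assert (sum_first f n <= INR n * c) by (apply sum_first_le; intros; apply Hhead; lia).
    nra.
  - replace n with (m + (n - m))%nat by lia. rewrite sum_first_add, plus_INR.
    assert (sum_first f m <= INR m * c) by (apply sum_first_le; auto).
    assert (hk : (1 <= n - m)%nat) by lia.
    pose proof (proj1 (mean_lt _ _ c hk) (Htail _ hk)).
    pose proof (pos_INR m); pose proof (lt_0_INR (n - m) ltac:(lia)); nra.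
Qed.

Definition equi_inv_mean_at {X U : Type} (d : X -> X -> R) (F : X -> U -> X)
  (Q : X -> Prop) (x : X) (eps : R) : Prop :=
  exists (delta : R) (w : nat -> U), 0 < delta /\
    forall (n : nat) (y : X), (1 <= n)%nat -> d x y < delta -> Q y ->
      mean (fun i => dist_set d Q (traj F i y w)) n < eps.

Section Dichotomy.
Variables (X U : Type) (d : X -> X -> R) (dU : U -> U -> R) (F : X -> U -> X).
Hypotheses (hd : is_metric d) (hdU : is_metric dU)
  (hphi : traj_continuous d dU F).
Variable Q : X -> Prop.
Hypotheses (hQ : control_set d F Q)
  (hint : forall z, m_closure d (m_interior d Q) z <-> m_closure d Q z).

(** Spreading: precision eps/2 at one point of Q gives precision eps at
    every point of Q.  Follow the steering path of [steer_into_interior],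
    then switch to the control of x1. *)
Lemma equi_inv_mean_at_spread x x1 eps :
  Q x -> Q x1 -> 0 < eps ->
  equi_inv_mean_at d F Q x1 (eps / 2) -> equi_inv_mean_at d F Q x eps.
Proof.
  intros Qx Qx1 he [d1 [w1 [hd1 H1]]].
  destruct (steer_into_interior X U d dU F hd hdU hphi Q x x1 d1)
    as [m [w [rho [hrho [Hpath Hnear]]]]]; auto.
  destruct (traj_continuous_upto X U d dU F hdU hphi m x w (Rmin (eps / 2) rho))
    as [dl [hdl Hdl]]; [now apply Rmin_pos; lra|].
  pose proof (Rmin_l (eps / 2) rho); pose proof (Rmin_r (eps / 2) rho).
  exists dl, (concat m w w1); split; auto.
  intros n y hn hy Qy.
  replace eps with (2 * (eps / 2)) by field.
  apply (mean_split_lt _ m); auto; [lra| |].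
  - intros i hi. rewrite traj_concat_le by lia.
    pose proof (dist_set_le d Q (traj F i y w) (traj F i x w) hd (Hpath i ltac:(lia))).
    destruct hd as [_ [_ [hsym _]]]. rewrite hsym in H2.
    specialize (Hdl y hy i ltac:(lia)); lra.
  - intros k hk.
    destruct (Hnear (traj F m y w)) as [Qy' hy'];
      [specialize (Hdl y hy m (le_n m)); lra|].
    rewrite (mean_ext _ (fun i => dist_set d Q (traj F i (traj F m y w) w1)));
      [now apply H1 | intro j; now rewrite traj_concat].
Qed.

(** If precision eps0 fails at one point, precision eps0/2 fails at every
    point and for every control: Q is unstable in the mean. *)
Lemma unstable_of_failure x0 eps0 :
  Q x0 -> 0 < eps0 -> ~ equi_inv_mean_at d F Q x0 eps0 -> unstable_mean d F Q.
Proof.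
  intros Qx0 he0 Hfail. exists (eps0 / 2); split; [lra|].
  intros x Qx delta hdel w. apply NNPP; intro Hstable.
  apply Hfail, (equi_inv_mean_at_spread x0 x eps0); auto.
  exists delta, w; split; auto. intros n y hn hy Qy.
  apply Rnot_le_lt; intro Hge.
  apply Hstable; exists y; repeat split; auto. exists n; split; auto; lra.
Qed.

End Dichotomy.

Theorem mainTheorem8
  (X U : Type) (d : X -> X -> R) (dU : U -> U -> R) (F : X -> U -> X)
  (hd : is_metric d) (hdU : is_metric dU) (hUc : m_compact dU)
  (hFc : forall (u : U) (x : X) (eps : R), 0 < eps ->
           exists delta, 0 < delta /\ forall y, d x y < delta -> d (F x u) (F y u) < eps)
  (hphi : traj_continuous d dU F)
  (Q : X -> Prop) (hQ : control_set d F Q)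
  (hint : forall x, m_closure d (m_interior d Q) x <-> m_closure d Q x) :
  equi_inv_mean d F Q \/ unstable_mean d F Q.
Proof.
  destruct (classic (exists x0 eps0,
              Q x0 /\ 0 < eps0 /\ ~ equi_inv_mean_at d F Q x0 eps0))
    as [[x0 [eps0 [Qx0 [he0 Hfail]]]] | Hall].
  - right; now apply (unstable_of_failure X U d dU F hd hdU hphi Q hQ hint x0 eps0).
  - left; intros x Qx eps he. apply NNPP; intro Hfail.
    apply Hall; now exists x, eps.
Qed.
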